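(* Let $X$ be a smooth Calabi--Yau threefold arising as an anticanonical hypersurface in a toric variety $V$ as in the Batyrev construction from a favorable reflexive polytope, with prime toric divisor classes $[D_\rho]$. If $[D]$ is a non-trivial Hilbert basis element, then there is no expression $[D]=\sum_\rho a_\rho[D_\rho]$ with all $a_\rho\geq 0$ real such that some $a_\rho\geq 1$.
   Context: The prime toric divisors of $X$ are the restrictions $D_\rho=\hat D_\rho\cap X$ of the torus-invariant prime divisors of $V$ corresponding to nonzero lattice points of the polytope not interior to facets. $\mathcal{E}_V\subset H^2(X,\mathbb{R})$ is the cone generated by the $[D_\rho]$. The Hilbert basis of $\mathcal{E}_V$ is the minimal set of integral vectors generating all its integral points over $\mathbb{Z}_{\ge 0}$; a non-trivial Hilbert basis element is a Hilbert basis element that is not one of the $[D_\rho]$. *)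

(* Abstract combinatorial model of the cone E_V in H^2(X,R). *)
From mathcomp Require Import all_boot all_order all_algebra.
From mathcomp Require Export reals.
Set Implicit Arguments. Unset Strict Implicit. Unset Printing Implicit Defensive.
Import Order.TTheory GRing.Theory Num.Theory.
Local Open Scope ring_scope.

(* integral class in H^2(X,Z) = Z^h, viewed in H^2(X,R) = R^h *)
Definition realv (R : realType) (h : nat) (v : 'rV[int]_h) : 'rV[R]_h :=
  map_mx (fun z : int => z%:~R) v.

(* membership in the cone E_V generated by the classes D i = [D_rho] *)
Definition in_cone (R : realType) (h k : nat) (D : 'I_k -> 'rV[int]_h)
  (x : 'rV[R]_h) : Prop :=
  exists a : 'I_k -> R, (forall i, 0 <= a i) /\ x = \sum_i a i *: realv R (D i).

Definition pointed (R : realType) (h k : nat) (D : 'I_k -> 'rV[int]_h) : Prop :=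
  forall x : 'rV[R]_h, in_cone D x -> in_cone D (- x) -> x = 0.

Definition integral_point (R : realType) (h k : nat) (D : 'I_k -> 'rV[int]_h)
  (v : 'rV[int]_h) : Prop := in_cone D (realv R v).

Definition generates (R : realType) (h k : nat) (D : 'I_k -> 'rV[int]_h)
  (H : 'rV[int]_h -> Prop) : Prop :=
  forall v, integral_point R D v ->
    exists s : seq 'rV[int]_h, (forall w, w \in s -> H w) /\ v = \sum_(w <- s) w.

Definition is_hilbert_basis (R : realType) (h k : nat) (D : 'I_k -> 'rV[int]_h)
  (H : 'rV[int]_h -> Prop) : Prop :=
  (forall w, H w -> integral_point R D w) /\ generates R D H /\
  (forall H' : 'rV[int]_h -> Prop, (forall w, H' w -> H w) ->
      generates R D H' -> forall w, H w -> H' w).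

(* If [v = sum_i a_i D_i] with [a_j >= 1], then [v - D_j] is an integral point of the cone,
   so [v = D_j + (v - D_j)] splits [v] into two integral points.  Decompose both over the
   Hilbert basis.  By pointedness neither decomposition can use [v]: otherwise [D_j - v] or
   [-D_j] would lie in the cone, forcing [v = D_j] or [D_j = 0].  Thus [v] is a sum of the
   other basis elements, and the basis with [v] removed still generates all integral
   points, contradicting minimality. *)
From HB Require Import structures.
From mathcomp Require Import all_boot all_order all_algebra.
From mathcomp Require Import reals.
Import Order.TTheory GRing.Theory Num.Theory.
Local Open Scope ring_scope.

Set Implicit Arguments.
Unset Strict Implicit.
Unset Printing Implicit Defensive.

Section NatComb.

Variable V : nmodType.
Implicit Types (H : V -> Prop) (u v w : V).

Definition nat_comb H u : Prop :=
  exists s : seq V, (forall w, w \in s -> H w) /\ u = \sum_(w <- s) w.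

Lemma nat_comb1 H w : H w -> nat_comb H w.
Proof. by move=> Hw; exists [:: w]; split=> [x|]; rewrite ?inE ?big_seq1 // => /eqP ->. Qed.

Lemma nat_combD H u v : nat_comb H u -> nat_comb H v -> nat_comb H (u + v).
Proof.
move=> [s [Hs ->]] [t [Ht ->]]; exists (s ++ t); split; last by rewrite big_cat.
by move=> w; rewrite mem_cat => /orP[]; [exact: Hs | exact: Ht].
Qed.

Lemma nat_comb_trans H H' u :
  (forall w, H w -> nat_comb H' w) -> nat_comb H u -> nat_comb H' u.
Proof.
move=> HH' [s [Hs ->]]; elim: s Hs => [|x s IHs] Hs; first by exists [::].
rewrite big_cons; apply: nat_combD; first by apply/HH'/Hs; rewrite mem_head.
by apply: IHs => w ws; apply: Hs; rewrite in_cons ws orbT.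
Qed.

End NatComb.

Lemma nat_comb_split (V : zmodType) (H : V -> Prop) (u v : V) :
  nat_comb H u -> nat_comb (fun w => H w /\ w != v) u \/ nat_comb H (u - v).
Proof.
move=> [s [Hs ->]]; have [vs | vNs] := boolP (v \in s).
  right; exists (rem v s); split=> [w /mem_rem|]; first exact: Hs.
  by rewrite (perm_big _ (perm_to_rem vs)) big_cons addrC addKr.
left; exists s; split=> // w ws; split; first exact: Hs.
by apply: contraNneq vNs => <-.
Qed.

Lemma realv_is_zmod_morphism (R : realType) (h : nat) : GRing.zmod_morphism (@realv R h).
Proof. by move=> x y; rewrite /realv map_mxB. Qed.

HB.instance Definition _ (R : realType) (h : nat) :=
  GRing.isZmodMorphism.Build _ _ (@realv R h) (@realv_is_zmod_morphism R h).

Lemma realv_inj (R : realType) (h : nat) : injective (@realv R h).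
Proof.
move=> x y /matrixP E; apply/matrixP=> i j.
by have := E i j; rewrite !mxE => /intr_inj.
Qed.

Section IntegralPoints.

Variables (R : realType) (h k : nat) (D : 'I_k -> 'rV[int]_h).
Local Notation in_cone := (@in_cone R h k D).
Local Notation integral_point := (@integral_point R h k D).

Lemma in_coneD x y : in_cone x -> in_cone y -> in_cone (x + y).
Proof.
move=> [a [a_ge0 ->]] [b [b_ge0 ->]]; exists (fun i => a i + b i); split.
  by move=> i; rewrite addr_ge0.
by rewrite -big_split; apply: eq_bigr => i _; rewrite scalerDl.
Qed.

Lemma integral_point_gen i : integral_point (D i).
Proof.
exists (fun j => (j == i)%:R); split=> [j|]; first exact: ler0n.
rewrite (bigD1 i) //= eqxx scale1r big1 ?addr0 // => j /negPf ->.
exact: scale0r.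
Qed.

Lemma integral_point_nat_comb (H : 'rV[int]_h -> Prop) u :
  (forall w, H w -> integral_point w) -> nat_comb H u -> integral_point u.
Proof.
move=> HI [s [Hs ->]]; rewrite /integral_point raddf_sum.
elim: s Hs => [|x s IHs] Hs.
  by rewrite big_nil; exists (fun=> 0); split=> //; rewrite big1 // => i _; rewrite scale0r.
rewrite big_cons; apply: in_coneD; first by apply/HI/Hs; rewrite mem_head.
by apply: IHs => w ws; apply: Hs; rewrite in_cons ws orbT.
Qed.

Lemma pointed_integral_eq0 u :
  pointed R D -> integral_point u -> integral_point (- u) -> u = 0.
Proof.
move=> Hpt Iu; rewrite /integral_point raddfN => /(Hpt _ Iu).
by rewrite -(raddf0 (@realv R h)) => /realv_inj.
Qed.

Lemma integral_point_sub_gen (a : 'I_k -> R) v j :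
  (forall i, 0 <= a i) -> realv R v = \sum_i a i *: realv R (D i) -> 1 <= a j ->
  integral_point (v - D j).
Proof.
move=> a_ge0 Ev a_j; exists (fun i => a i - (i == j)%:R); split.
  by move=> i; case: eqP => [->|_]; rewrite ?subr_ge0 ?subr0.
have -> : realv R (v - D j) = realv R v - realv R (D j) by exact: raddfB.
rewrite Ev (bigD1 j) //= [RHS](bigD1 j) //= eqxx scalerBl scale1r addrAC.
by congr (_ + _); apply: eq_bigr => i /negPf ->; rewrite subr0.
Qed.

Section HilbertBasis.

Variable H : 'rV[int]_h -> Prop.
Hypothesis HH : is_hilbert_basis R D H.

Lemma hilbert_nat_comb_avoid u v :
  integral_point u -> ~ integral_point (u - v) -> nat_comb (fun w => H w /\ w != v) u.
Proof.
case: HH => [HI [Hgen _]] Iu NIuv.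
have [//|Huv] := nat_comb_split v (Hgen u Iu : nat_comb H u).
by case: NIuv; exact: integral_point_nat_comb Huv.
Qed.

Lemma hilbert_basis_irredundant v : H v -> ~ nat_comb (fun w => H w /\ w != v) v.
Proof.
case: HH => [_ [Hgen Hmin]] Hv Hv'.
pose H' w := H w /\ w != v.
have Hgen' : generates R D H'.
  move=> u Iu; apply: (nat_comb_trans _ (Hgen u Iu : nat_comb H u)) => w Hw.
  by have [->|wNv] := eqVneq w v; [exact: Hv' | exact: nat_comb1].
by case: (Hmin H' (fun w => @proj1 _ _) Hgen' v Hv); rewrite eqxx.
Qed.

End HilbertBasis.

End IntegralPoints.

Theorem lemma3p15 (R : realType) (h k : nat) (D : 'I_k -> 'rV[int]_h)
  (HD0 : forall i, D i != 0) (Hpt : pointed R D)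
  (H : 'rV[int]_h -> Prop) (HH : is_hilbert_basis R D H)
  (v : 'rV[int]_h) (Hv : H v) (Hnt : forall i, v != D i) :
  ~ (exists a : 'I_k -> R, (forall i, 0 <= a i) /\
       realv R v = \sum_i a i *: realv R (D i) /\ (exists i, 1 <= a i)).
Proof.
move=> [a [a_ge0 [Ev [j a_j]]]].
have IvDj := integral_point_sub_gen a_ge0 Ev a_j.
have IDj := integral_point_gen R D j.
apply: (hilbert_basis_irredundant HH Hv).
suff : nat_comb (fun w => H w /\ w != v) (v - D j + D j) by rewrite subrK.
apply: nat_combD; apply: (hilbert_nat_comb_avoid HH).
- exact: IvDj.
- rewrite addrAC subrr sub0r => /(pointed_integral_eq0 Hpt IDj)/eqP.
  exact/negP/HD0.
- exact: IDj.
- rewrite -opprB => /(pointed_integral_eq0 Hpt IvDj)/eqP.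
  by rewrite subr_eq0; exact/negP/Hnt.
Qed.
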